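(* The number of ordinary $k\times k$ permutation matrices is $k!-o(k!)$ as $k\to\infty$; i.e. almost all $k\times k$ permutation matrices are ordinary.
   Context: Say a permutation matrix $P$ reduces to a class if some matrix obtainable from $P$ by a sequence of vertical/horizontal reflections and $90$-degree rotations lies in that class. A permutation matrix is ordinary if it reduces to none of the following four classes. ''Splitting the rows into contiguous nonempty sets $R_1,R_2,\dots$'' means the rows of $R_1$ precede those of $R_2$, etc., and similarly for columns. Class 1: permutation matrices $P$ whose rows split into contiguous nonempty $R_1,R_2$ and columns into contiguous nonempty $C_1,C_2$ such that $P$ has ones in $R_1\times C_1$ and in $R_2\times C_2$, and all ones of $P$ lie in these two submatrices except for at most $2$ ones in $R_1\times C_2$; if there are two ones in $R_1\times C_2$, they are in adjacent rows. Class 2: permutation matrices $P$ whose rows split into contiguous nonempty $R_1,R_2,R_3$ and columns into contiguous nonempty $C_1,C_2$ such that $P$ has ones in $R_1\times C_2$ and in $R_3\times C_2$, at least two ones in $R_2\times C_1$, and all ones of $P$ lie in these three submatrices except for at most $2$ ones in $R_2\times C_2$; if there are two ones in $R_2\times C_2$, they are in adjacent rows. Class 3: permutation matrices obtained from some element $X$ of Class 2 (with its sets $R_1,R_2,R_3,C_1,C_2$) by taking the row $r$ of $X$ containing the rightmost one in $R_2\times C_1$, deleting $r$ from its position, and inserting it above the first row of $X$. Class 4: permutation matrices $P$ whose rows split into contiguous nonempty $R_1,R_2,R_3$ and columns into contiguous nonempty $C_1,C_2,C_3$ such that $P$ has ones in each of $R_1\times C_2$, $R_2\times C_1$, $R_2\times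 C_3$, $R_3\times C_2$, and only in these submatrices. *)

From mathcomp Require Import all_boot all_order all_fingroup.
From mathcomp Require Import boolp.
Set Implicit Arguments. Unset Strict Implicit. Unset Printing Implicit Defensive.

(* A k x k permutation matrix is represented by s : {perm 'I_k}; it has a one
   at (row i, column j) iff s i = j.  Rows are numbered 0..k-1 top to bottom,
   columns 0..k-1 left to right. *)

Local Open Scope group_scope.

Definition revp (k : nat) : {perm 'I_k} := perm (@rev_ord_inj k).

(* Symmetries (recall (s * t) x = t (s x)):
   - reversing the order of rows:     Q i = P (k-1-i)         i.e. Q = revp * P
   - reversing the order of columns:  Q i = k-1 - P i         i.e. Q = P * revp
   - rotation by 90 degrees: Q(i,j) = P(k-1-j, i), i.e. Q i = k-1 - P^-1 i,
     i.e. Q = P^-1 * revp. *)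
Definition flip_rows k (s : {perm 'I_k}) : {perm 'I_k} := revp k * s.
Definition flip_cols k (s : {perm 'I_k}) : {perm 'I_k} := s * revp k.
Definition rot90 k (s : {perm 'I_k}) : {perm 'I_k} := s^-1 * revp k.

Inductive sym_reach k (s : {perm 'I_k}) : {perm 'I_k} -> Prop :=
| sr_refl : sym_reach s s
| sr_rows t : sym_reach s t -> sym_reach s (flip_rows t)
| sr_cols t : sym_reach s t -> sym_reach s (flip_cols t)
| sr_rot t : sym_reach s t -> sym_reach s (rot90 t).

Definition small_adj k (A : {set 'I_k}) : Prop :=
  #|A| <= 2 /\ forall i1 i2 : 'I_k, i1 \in A -> i2 \in A -> i1 <= i2.+1.

(* Row split R1 = [0,a), R2 = [a,k) ; column split C1 = [0,c), C2 = [c,k). *)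
Definition class1 k (s : {perm 'I_k}) : Prop :=
  exists a c : nat, [/\ 0 < a < k, 0 < c < k,
    (exists i : 'I_k, (i < a) && (s i < c)),
    (exists i : 'I_k, (a <= i) && (c <= s i))
  & (forall i : 'I_k, a <= i -> c <= s i)
    /\ small_adj [set i : 'I_k | (i < a) && (c <= s i)]].

(* Row split R1 = [0,a), R2 = [a,b), R3 = [b,k); columns C1 = [0,c), C2 = [c,k). *)
Definition class2w k (s : {perm 'I_k}) (a b c : nat) : Prop :=
  [/\ 0 < a, a < b, b < k & 0 < c < k] /\
  [/\ (exists i : 'I_k, (i < a) && (c <= s i)),
    (exists i : 'I_k, (b <= i) && (c <= s i)),
    2 <= #|[set i : 'I_k | (a <= i < b) && (s i < c)]|,
    (forall i : 'I_k, s i < c -> a <= i < b)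
  & small_adj [set i : 'I_k | (a <= i < b) && (c <= s i)]].

Definition class2 k (s : {perm 'I_k}) : Prop :=
  exists a b c, class2w s a b c.

(* row index of the old matrix that becomes row i after moving row r to the top *)
Definition mvrow (r i : nat) : nat :=
  if i == 0 then r else if i <= r then i.-1 else i.

Definition class3 k (q : {perm 'I_k}) : Prop :=
  exists (x : {perm 'I_k}) (a b c : nat) (r : 'I_k),
    [/\ class2w x a b c,
        (* r is the row of the rightmost one in R2 x C1 *)
        (a <= r < b) && (x r < c),
        (forall i : 'I_k, a <= i < b -> x i < c -> x i <= x r)
      & (forall i i' : 'I_k, nat_of_ord i' = mvrow r i -> q i = x i')].

(* Rows R1=[0,a), R2=[a,b), R3=[b,k); columns C1=[0,c), C2=[c,d), C3=[d,k). *)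
Definition class4 k (s : {perm 'I_k}) : Prop :=
  exists a b c d : nat, [/\ [/\ 0 < a, a < b & b < k], [/\ 0 < c, c < d & d < k],
    [/\ exists i : 'I_k, (i < a) && (c <= s i < d),
        exists i : 'I_k, (a <= i < b) && (s i < c),
        exists i : 'I_k, (a <= i < b) && (d <= s i)
      & exists i : 'I_k, (b <= i) && (c <= s i < d)]
  & forall i : 'I_k,
      [|| (i < a) && (c <= s i < d), (a <= i < b) && (s i < c),
          (a <= i < b) && (d <= s i) | (b <= i) && (c <= s i < d)]].

Definition reduces_to k (s : {perm 'I_k}) (C : {perm 'I_k} -> Prop) : Prop :=
  exists t, sym_reach s t /\ C t.

Definition ordinary k (s : {perm 'I_k}) : Prop :=
  ~ reduces_to s (@class1 k) /\ ~ reduces_to s (@class2 k) /\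
  ~ reduces_to s (@class3 k) /\ ~ reduces_to s (@class4 k).

Definition n_ordinary (k : nat) : nat :=
  #|[set s : {perm 'I_k} | `[< ordinary s >]]|.

From mathcomp Require Import all_boot all_order all_fingroup zify.
From mathcomp Require Import boolp.
Set Implicit Arguments. Unset Strict Implicit. Unset Printing Implicit Defensive.

(* Up to one of the eight symmetries of the square, a permutation that is not
   ordinary lies in one of the four classes.  A member of a class maps a set X
   of rows (an interval, the complement of an interval, or that complement
   minus the first row) into an interval Y of columns with
   |X| <= |Y| <= |X| + 3, and X, Y are fixed by O(k^3) choices of block
   boundaries.  At most |Y|^_|X| (k - |X|)! permutations do so, a fraction
   C(|Y|, |X|) / C(k, |X|) of all; applying the same bound to the inverse,
   which maps the complement of Y into the complement of X, the fraction is at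
   most C(m + 3, 3) / C(k, m) for m = min(|X|, k - |Y|).  This is O(1/k) for
   m = 1, O(1/k^2) for m <= 7 and O(k^3/k^8) for all m, while only O(1), O(k)
   and O(k^3) boundary choices fall in these three regimes.  Hence each class
   has O(k!/k) members. *)

Lemma leq_bin_succ n m : m.*2.+1 <= n -> 'C(n, m) <= 'C(n, m.+1).
Proof.
move=> lt_m2_n; rewrite -(leq_pmul2l (ltn0Sn m)) mul_bin_left leq_mul2r.
by apply/orP; right; lia.
Qed.

Lemma leq_bin_mid n r p : r <= p -> p <= n - r -> 'C(n, r) <= 'C(n, p).
Proof.
move=> le_rp le_p_nr.
wlog le_p2n : p le_rp le_p_nr / p.*2 <= n.
  move=> W; case: (leqP p.*2 n) => lt_n_p2; first exact: W.
  rewrite -[X in _ <= X](@bin_sub n p); last lia.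
  by apply: W; lia.
elim: p le_rp le_p_nr le_p2n => [|p IHp] le_rp le_p_nr le_p2n.
  by move: le_rp; rewrite leqn0 => /eqP->.
case: (ltngtP r p.+1) => [lt_rp||->] //; last lia.
by apply: leq_trans (IHp _ _ _) (leq_bin_succ _); lia.
Qed.

Lemma exp_subn_leq_ffact n m : (n - m) ^ m <= n ^_ m.
Proof.
rewrite ffact_prod -(card_ord m) -prod_nat_const card_ord.
by apply: leq_prod => i _; apply/leq_sub2l/ltnW.
Qed.

Lemma ffact_leq_exp n m : n ^_ m <= n ^ m.
Proof.
rewrite ffact_prod -(card_ord m) -prod_nat_const card_ord.
by apply: leq_prod => i _; apply: leq_subr.
Qed.

Lemma sum_ord_leq n j : \sum_(i < n) (i <= j : nat) = minn n j.+1.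
Proof.
elim: n => [|n IHn]; first by rewrite big_ord0.
by rewrite big_ord_recr /= IHn; case: (leqP n j) => /=; lia.
Qed.

Lemma sum_ord_geq n j : \sum_(i < n) (j <= i : nat) = n - minn n j.
Proof.
elim: n => [|n IHn]; first by rewrite big_ord0.
by rewrite big_ord_recr /= IHn; case: (leqP j n) => /=; lia.
Qed.

Lemma sum_fst (I J : finType) (f : I -> nat) :
  \sum_(x : I * J) f x.1 = #|J| * \sum_i f i.
Proof.
rewrite -(pair_bigA _ (fun i _ => f i)) big_distrr /=.
by apply: eq_bigr => i _; rewrite sum_nat_const mulnC.
Qed.

Lemma sum_snd (I J : finType) (g : J -> nat) :
  \sum_(x : I * J) g x.2 = #|I| * \sum_j g j.
Proof. by rewrite -(pair_bigA _ (fun _ j => g j)) sum_nat_const. Qed.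

Lemma sum_mul_pair (I J : finType) (f : I -> nat) (g : J -> nat) :
  \sum_(x : I * J) f x.1 * g x.2 = (\sum_i f i) * (\sum_j g j).
Proof.
rewrite -(pair_bigA _ (fun i j => f i * g j)) big_distrl /=.
by apply: eq_bigr => i _; rewrite big_distrr.
Qed.

Definition ord_itv k a b : {set 'I_k} := [set i : 'I_k | a <= i < b].

Lemma in_ord_itv k a b (i : 'I_k) : (i \in ord_itv k a b) = (a <= i < b).
Proof. by rewrite inE. Qed.

Lemma card_ord_itv k a b : #|ord_itv k a b| = minn k b - a.
Proof.
rewrite -sum1dep_card -(big_mkord (fun i => a <= i < b) (fun _ => 1)) big_mkcond /=.
elim: k => [|k IHk]; first by rewrite big_geq // min0n.
rewrite big_nat_recr //= IHk; case: ifP => [/andP[]|/negbT]; first lia.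
by rewrite negb_and -!ltnNge => /orP[]; lia.
Qed.

Lemma card_ord_itvC k a b : #|~: ord_itv k a b| = k - (minn k b - a).
Proof. by rewrite cardsCs setCK card_ord card_ord_itv. Qed.

Lemma leq_card_setCU (T : finType) (A B : {set T}) : #|T| - (#|A| + #|B|) <= #|~: (A :|: B)|.
Proof. by have := cardsC (A :|: B); have := (leq_card_setU A B).1; lia. Qed.

Section PermInto.
Variable T : finType.
Implicit Types (X Y : {set T}) (s : {perm T}).

Definition perm_into X Y := [set s : {perm T} | [forall i in X, s i \in Y]].

Lemma perm_intoP X Y s : reflect {in X, forall i, s i \in Y} (s \in perm_into X Y).
Proof. by rewrite inE; apply: (iffP forall_inP). Qed.

Lemma leq_card_image s X Y : {in X, forall i, s i \in Y} -> #|X| <= #|Y|.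
Proof.
move=> sXY; rewrite -(card_imset _ (@perm_inj _ s)); apply: subset_leq_card.
by apply/subsetP => _ /imsetP[i Xi ->]; apply: sXY.
Qed.

Lemma leq_card_preimage s X Y : (forall i, s i \in Y -> i \in X) -> #|Y| <= #|X|.
Proof. by move=> sYX; apply: (@leq_card_image s^-1) => j Yj; apply: sYX; rewrite permKV. Qed.

Lemma card_perm_agree X s0 :
  #|[set s : {perm T} | [forall i in X, s i == s0 i]]| <= (#|T| - #|X|)`!.
Proof.
have -> : #|T| - #|X| = #|~: X| by have := cardsC X; lia.
rewrite -card_perm.
apply: leq_trans (leq_imset_card (fun u => u * s0)%g (perm_on (~: X))).
apply: subset_leq_card; apply/subsetP => s; rewrite inE => /forall_inP s_s0.
apply/imsetP; exists (s * s0^-1)%g; last by rewrite mulgKV.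
apply/subsetP => i; rewrite !inE permM; apply: contra => Xi.
by rewrite (eqP (s_s0 i Xi)) permK.
Qed.

Lemma card_perm_into X Y : #|perm_into X Y| <= #|Y| ^_ #|X| * (#|T| - #|X|)`!.
Proof.
pose tau s := map_tuple s (enum_tuple X).
have <- : #|[set t : #|X|.-tuple T | all (mem Y) t & uniq t]| = #|Y| ^_ #|X|.
  by rewrite card_uniq_tuples.
rewrite -sum1_card (partition_big tau (mem [set t : #|X|.-tuple T | all (mem Y) t & uniq t])); last first.
  move=> s; rewrite inE => /forall_inP sXY; rewrite /= inE map_inj_uniq ?enum_uniq ?andbT; last exact: perm_inj.
  by apply/allP => y /mapP[i]; rewrite mem_enum => Xi ->; apply: sXY.
rewrite -sum_nat_const; apply: leq_sum => t _.
case: (pickP [pred s | (s \in perm_into X Y) && (tau s == t)]) => [s0 | none]; last first.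
  by rewrite big1 // => s Hs; have := none s; rewrite /= Hs.
move=> /andP[_ /eqP s0t]; apply: leq_trans (card_perm_agree X s0).
rewrite sum1_card; apply: subset_leq_card; apply/subsetP => s.
rewrite !inE => /andP[_ /eqP st]; apply/forall_inP => i Xi.
have /(congr1 val) /eq_in_map /(_ i) : tau s = tau s0 by rewrite st s0t.
by rewrite mem_enum => /(_ Xi) ->.
Qed.

Lemma card_perm_intoC X Y : #|perm_into X Y| = #|perm_into (~: Y) (~: X)|.
Proof.
rewrite -[LHS](card_imset _ (@invg_inj _)); apply: eq_card => u.
apply/imsetP/perm_intoP => [[s /perm_intoP sXY ->] j | uYX].
  by rewrite !inE; apply: contra => /sXY; rewrite permKV.
exists u^-1%g; last by rewrite invgK.
apply/perm_intoP => i Xi; apply: contraLR Xi => Y'i.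
by have := uYX (u^-1%g i); rewrite !inE permKV => /(_ Y'i).
Qed.

Lemma card_perm_into_bin X Y : #|perm_into X Y| * 'C(#|T|, #|X|) <= #|T|`! * 'C(#|Y|, #|X|).
Proof.
have le_XT : #|X| <= #|T| by apply: max_card.
apply: leq_trans (leq_mul (card_perm_into X Y) (leqnn _)) _.
by rewrite -bin_ffact -(bin_fact le_XT); nia.
Qed.

Lemma card_perm_into0 X Y : #|Y| < #|X| -> #|perm_into X Y| = 0.
Proof.
move=> lt_YX; have := card_perm_into_bin X Y; rewrite (bin_small lt_YX) muln0.
have : 0 < 'C(#|T|, #|X|) by rewrite bin_gt0 max_card.
by rewrite leqn0 muln_eq0 lt0n => /negbTE-> /orP[/eqP|].
Qed.

Lemma card_perm_into_gap X Y : #|Y| <= #|X| + 3 ->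
  #|perm_into X Y| * 'C(#|T|, #|X|) <= #|T|`! * 'C(#|X| + 3, 3).
Proof.
move=> gapXY; apply: leq_trans (card_perm_into_bin X Y) _; rewrite leq_mul2l; apply/orP; right.
by rewrite -{2}(addKn #|X| 3) bin_sub ?leq_addr //; apply: leq_bin2l.
Qed.

Lemma card_perm_into_cogap X Y : #|Y| <= #|X| + 3 ->
  #|perm_into X Y| * 'C(#|T|, #|T| - #|Y|) <= #|T|`! * 'C(#|T| - #|Y| + 3, 3).
Proof.
move=> gapXY; have -> : #|T| - #|Y| = #|~: Y| by have := cardsC Y; lia.
rewrite card_perm_intoC; apply: card_perm_into_gap.
by have := cardsC X; have := cardsC Y; lia.
Qed.

Lemma card_perm_into_min X Y : #|X| <= #|Y| <= #|X| + 3 ->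
  #|perm_into X Y| * 'C(#|T|, minn #|X| (#|T| - #|Y|))
    <= #|T|`! * 'C(minn #|X| (#|T| - #|Y|) + 3, 3).
Proof.
move=> /andP[_ gapXY]; rewrite /minn; case: ltnP => _.
  exact: card_perm_into_gap.
exact: card_perm_into_cogap.
Qed.

End PermInto.

Arguments perm_intoP {T X Y s}.

Section Weights.
Variable k : nat.

(* Weights are numerators of fractions of k! over the common denominator
   [denom]: [weight1], [weight2], [weight3] stand for 120/k, 120/'C(k, 2)
   and 'C(k + 3, 3)/'C(k, 8). *)
Definition denom := k * 'C(k, 2) * 'C(k, 8).
Definition weight1 := 120 * 'C(k, 2) * 'C(k, 8).
Definition weight2 := 120 * k * 'C(k, 8).
Definition weight3 := 'C(k + 3, 3) * k * 'C(k, 2).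

Definition weight m := (if m <= 1 then weight1 else 0)
  + (if m <= 7 then weight2 else 0) + weight3.

Lemma leq_weight m N : 0 < m -> m.*2 <= k -> 16 <= k ->
  N * 'C(k, m) <= k`! * 'C(m + 3, 3) -> N * denom <= k`! * weight m.
Proof.
move=> m_gt0 le_m2k k_ge16 bound_m.
have scale b u w : N * b <= k`! * u -> N * (b * w) <= k`! * (u * w).
  by move=> Nbu; rewrite !mulnA leq_mul2r Nbu orbT.
have C120 : m <= 7 -> 'C(m + 3, 3) <= 120.
  by move=> le_m7; apply: leq_trans (leq_bin2l 3 (_ : m + 3 <= 10)) _ => //; lia.
rewrite /weight /denom /weight1 /weight2 /weight3.
case: (leqP m 1) => [le_m1 | lt1m].
  have m1 : m = 1 by lia.
  apply: leq_trans (_ : _ <= k`! * (120 * 'C(k, 2) * 'C(k, 8))) _.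
    rewrite -!mulnA; apply: scale; move: bound_m; rewrite m1 bin1 => /leq_trans; apply.
    by rewrite leq_mul2l; apply/orP; right.
  by rewrite leq_mul2l -addnA leq_addr orbT.
case: (leqP m 7) => [le_m7 | lt7m].
  have C2m : 'C(k, 2) <= 'C(k, m) by apply: leq_bin_mid; lia.
  apply: leq_trans (_ : _ <= k`! * (120 * k * 'C(k, 8))) _.
    rewrite [k * _]mulnC -!mulnA; apply: scale.
    apply: leq_trans (leq_mul (leqnn N) C2m) _; apply: leq_trans bound_m _.
    by rewrite leq_mul2l C120 ?orbT.
  by rewrite leq_mul2l !add0n leq_addr orbT.
have C8m : 'C(k, 8) <= 'C(k, m) by apply: leq_bin_mid; lia.
rewrite [_ * 'C(k, 8)]mulnC -mulnA; apply: scale.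
apply: leq_trans (leq_mul (leqnn N) C8m) _; apply: leq_trans bound_m _.
by rewrite leq_mul2l leq_bin2l ?orbT //; lia.
Qed.

Lemma card_perm_into_weight (X Y : {set 'I_k}) :
  16 <= k -> 0 < #|X| -> #|Y| < k -> #|Y| <= #|X| + 3 ->
  #|perm_into X Y| * denom <= k`! * weight (minn #|X| (k - #|Y|)).
Proof.
move=> k_ge16 X_gt0 lt_Yk gapXY.
case: (ltnP #|Y| #|X|) => [lt_YX | le_XY]; first by rewrite card_perm_into0.
apply: leq_weight => //; try lia.
by have := @card_perm_into_min _ X Y; rewrite card_ord le_XY gapXY; apply.
Qed.

End Weights.

Lemma exp_leq_bin j M : exists K, forall k, K <= k -> M * (k + 3) ^ j <= 'C(k, j.+1).
Proof.
exists (3 * j + 8 + M * j.+1`! * 2 ^ j) => k le_Kk; set y := k - j.+1.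
have le_exp : (k + 3) ^ j <= (2 * y) ^ j.
  by elim: (j) => // i IHi; rewrite !expnS leq_mul //; lia.
have le_y : M * j.+1`! * 2 ^ j <= y by lia.
rewrite -(leq_pmul2r (fact_gt0 j.+1)) bin_ffact.
apply: leq_trans (exp_subn_leq_ffact k j.+1).
apply: leq_trans (_ : (M * j.+1`! * 2 ^ j) * y ^ j <= _); last first.
  by rewrite expnSr mulnC leq_mul2l le_y orbT.
by rewrite mulnAC -[_ * y ^ j]mulnA -expnMn leq_mul2l le_exp orbT.
Qed.

(* The coefficients bound, for each class, the number of boundary choices
   with m <= 1, with m <= 7, and in total. *)
Definition total_weight k :=
  30 * weight1 k + 128 * (k + 1) * weight2 k + 3 * (k + 1) ^ 3 * weight3 k.

Lemma total_weight_small M : exists K, forall k, K <= k -> total_weight k * M <= denom k.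
Proof.
have [K0 bin1_big] := exp_leq_bin 0 (3 * 30 * 120 * M).
have [K1 bin2_big] := exp_leq_bin 1 (3 * 128 * 120 * M).
have [K7 bin8_big] := exp_leq_bin 7 (9 * M).
exists (K0 + K1 + K7) => k le_Kk.
have {}bin1_big : 3 * 30 * 120 * M <= k.
  by move: (bin1_big k); rewrite bin1 muln1; apply; lia.
have {}bin2_big : 3 * 128 * 120 * M * (k + 1) <= 'C(k, 2).
  by apply: leq_trans (bin2_big k _); rewrite ?expn1 ?leq_mul2l ?leq_add2l ?orbT //; lia.
have {}bin8_big : 9 * M * ((k + 1) ^ 3 * 'C(k + 3, 3)) <= 'C(k, 8).
  apply: leq_trans (bin8_big k _) => //; last lia.
  rewrite leq_mul2l; apply/orP; right.
  have C3 : 'C(k + 3, 3) <= (k + 3) ^ 3.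
    by apply: leq_trans (ffact_leq_exp _ 3); rewrite -bin_ffact leq_pmulr.
  have k13 : (k + 1) ^ 3 <= (k + 3) ^ 3 by rewrite leq_exp2r //; lia.
  apply: leq_trans (leq_mul k13 C3) _; rewrite -expnD.
  by apply: leq_pexp2l; lia.
rewrite /total_weight /denom /weight1 /weight2 /weight3.
move: bin1_big bin2_big bin8_big; set C2 := 'C(k, 2); set C8 := 'C(k, 8).
set C3 := 'C(k + 3, 3); set P := (k + 1) ^ 3 => bin1_big bin2_big bin8_big.
have t1 := leq_mul bin1_big (leqnn (C2 * C8)).
have t2 := leq_mul bin2_big (leqnn (k * C8)).
have t3 := leq_mul bin8_big (leqnn (k * C2)).
nia.
Qed.

Lemma leq_card_bigcup (T I : finType) (P : pred I) (F : I -> {set T}) :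
  #|\bigcup_(i | P i) F i| <= \sum_(i | P i) #|F i|.
Proof.
elim/big_rec2: _ => [|i A n _ IH]; first by rewrite cards0.
by apply: leq_trans (leq_card_setU _ _).1 _; rewrite leq_add2l.
Qed.

Section ParametrizedCover.
Variables (k : nat) (I : finType) (V : pred I) (X Y : I -> {set 'I_k}) (n1 n2 : I -> nat).
Hypothesis k_ge16 : 16 <= k.
Hypothesis shape : forall x, V x ->
  let m := minn #|X x| (k - #|Y x|) in
  [/\ 0 < #|X x|, #|Y x| < k, #|Y x| <= #|X x| + 3,
      m <= 1 -> 0 < n1 x & m <= 7 -> 0 < n2 x].
Hypotheses (sum_n1 : \sum_x n1 x <= 30) (sum_n2 : \sum_x n2 x <= 128 * (k + 1)).
Hypothesis card_I : #|I| <= 3 * (k + 1) ^ 3.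

Lemma card_class_covered (C : {perm 'I_k} -> Prop) :
  (forall s, C s -> exists2 x, V x & s \in perm_into (X x) (Y x)) ->
  #|[set s : {perm 'I_k} | `[< C s >]]| * denom k <= k`! * total_weight k.
Proof.
move=> cover.
apply: leq_trans (_ : #|\bigcup_(x | V x) perm_into (X x) (Y x)| * denom k <= _).
  rewrite leq_mul2r; apply/orP; right; apply/subset_leq_card/subsetP => s.
  by rewrite inE => /asboolP/cover[x Vx sx]; apply/bigcupP; exists x.
apply: leq_trans (leq_mul (leq_card_bigcup _ _) (leqnn _)) _.
rewrite big_distrl /=.
apply: leq_trans (_ : \sum_(x | V x) k`! * (n1 x * weight1 k + n2 x * weight2 k + weight3 k) <= _).
  apply: leq_sum => x /shape [X_gt0 lt_Yk gapXY n1_gt0 n2_gt0].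
  apply: leq_trans (card_perm_into_weight k_ge16 X_gt0 lt_Yk gapXY) _.
  rewrite leq_mul2l /weight; apply/orP; right.
  rewrite leq_add2r; apply: leq_add; case: ifP => // m_small.
  - by apply: leq_pmull; apply: n1_gt0.
  - by apply: leq_pmull; apply: n2_gt0.
rewrite -big_distrr leq_mul2l; apply/orP; right.
apply: leq_trans (_ : \sum_x (n1 x * weight1 k + n2 x * weight2 k + weight3 k) <= _).
  by rewrite [X in _ <= X](bigID V) leq_addr.
have -> : \sum_x (n1 x * weight1 k + n2 x * weight2 k + weight3 k)
    = (\sum_x n1 x) * weight1 k + (\sum_x n2 x) * weight2 k + #|I| * weight3 k.
  by rewrite !big_split -big_distrl -[\sum_x n2 x * _]big_distrl sum_nat_const.
by apply: leq_add; [apply: leq_add|]; apply: leq_mul.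
Qed.

End ParametrizedCover.

Section Symmetries.
Variable k : nat.
Implicit Types s t : {perm 'I_k}.
Local Open Scope group_scope.

Definition special s := class1 s \/ class2 s \/ class3 s \/ class4 s.

Definition dihedral (b : bool * bool * bool) s :=
  (if b.1.1 then revp k else 1) * (if b.2 then s^-1 else s) * (if b.1.2 then revp k else 1).

Lemma revpK : revp k * revp k = 1.
Proof. by apply/permP => i; rewrite permM perm1 /revp !permE /= rev_ordK. Qed.

Lemma revpV : (revp k)^-1 = revp k.
Proof. by apply: (mulgI (revp k)); rewrite mulgV revpK. Qed.

Lemma sym_reach_dihedral s t : sym_reach s t -> exists b, t = dihedral b s.
Proof.
have revpKr u : u * revp k * revp k = u by rewrite -mulgA revpK mulg1.
elim=> [|_ _ [[[b1 b3] b2] ->]|_ _ [[[b1 b3] b2] ->]|_ _ [[[b1 b3] b2] ->]].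
- by exists (false, false, false); rewrite /dihedral mul1g mulg1.
- exists (~~ b1, b3, b2); rewrite /flip_rows /dihedral /=.
  by case: b1; rewrite ?mul1g ?mulgA ?revpK ?mul1g.
- exists (b1, ~~ b3, b2); rewrite /flip_cols /dihedral /=.
  by case: b3; rewrite ?mulg1 ?revpKr.
- exists (b3, ~~ b1, ~~ b2); rewrite /rot90 /dihedral /=.
  by case: b1; case: b2; case: b3;
    rewrite !invMg ?invgK ?revpV ?invg1 ?mul1g ?mulg1 ?mulgA ?revpKr.
Qed.

Lemma not_ordinary_special s : ~ ordinary s -> exists b, special (dihedral b s).
Proof.
have reduced C : (forall t, C t -> special t) -> reduces_to s C -> exists b, special (dihedral b s).
  by move=> CS [t [/sym_reach_dihedral[b ->] /CS]]; exists b.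
move=> not_ord; case: (pselect (reduces_to s (@class1 k))) => [|not1].
  by apply: reduced => t; left.
case: (pselect (reduces_to s (@class2 k))) => [|not2].
  by apply: reduced => t; right; left.
case: (pselect (reduces_to s (@class3 k))) => [|not3].
  by apply: reduced => t; right; right; left.
case: (pselect (reduces_to s (@class4 k))) => [|not4].
  by apply: reduced => t; right; right; right.
by case: not_ord.
Qed.

Lemma dihedral_inj b : injective (dihedral b).
Proof. by move=> s t /mulIg /mulgI; case: b.2 => //; apply: invg_inj. Qed.

Lemma card_not_ordinary :
  k`! - n_ordinary k <= 8 * #|[set s : {perm 'I_k} | `[< special s >]]|.
Proof.
set S := [set s : {perm 'I_k} | `[< special s >]].
have -> : k`! - n_ordinary k = #|~: [set s : {perm 'I_k} | `[< ordinary s >]]|.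
  by rewrite cardsCs setCK card_Sn.
have -> : 8 = #|{: bool * bool * bool}| by rewrite !card_prod card_bool.
rewrite -sum_nat_const; apply: leq_trans (_ : #|\bigcup_b (dihedral b @^-1: S)| <= _).
  apply/subset_leq_card/subsetP => s; rewrite !inE => /asboolPn/not_ordinary_special[b Sb].
  by apply/bigcupP; exists b; rewrite // !inE; apply/asboolP.
apply: leq_trans (leq_card_bigcup _ _) _.
by apply: leq_sum => b _; rewrite card_preimset //; apply: dihedral_inj.
Qed.

End Symmetries.

Section ClassShapes.
Variable k : nat.
Implicit Types (s : {perm 'I_k}) (a b c : nat).

Lemma class1_perm_into s : class1 s -> exists a c,
  [/\ 0 < c, c <= a <= c + 2, a < k & s \in perm_into (ord_itv k a k) (ord_itv k c k)].
Proof.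
case=> a [c [/andP[_ lt_ak] /andP[c_gt0 _] _ _ [R2_C2 [R1C2_small _]]]].
have sR2 : {in ord_itv k a k, forall i, s i \in ord_itv k c k}.
  by move=> i; rewrite !in_ord_itv !ltn_ord !andbT; apply: R2_C2.
exists a, c; split => //; last exact/perm_intoP; apply/andP; split.
  by have := leq_card_image sR2; rewrite !card_ord_itv; lia.
set T := [set i : 'I_k | (i < a) && (c <= s i)] in R1C2_small.
have sC2 i : s i \in ord_itv k c k -> i \in ord_itv k a k :|: T.
  by rewrite !inE !ltn_ord !andbT => ->; rewrite andbT; case: leqP.
have := leq_trans (leq_card_preimage sC2) (leq_card_setU _ _).1.
by rewrite !card_ord_itv; lia.
Qed.

Lemma class2w_perm_into s a b c : class2w s a b c ->
  [/\ [/\ 0 < a, b < k, 2 <= c & c <= b - a <= c + 2]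
    & s \in perm_into (~: ord_itv k a b) (ord_itv k c k)].
Proof.
case=> [[a_gt0 lt_ab lt_bk /andP[_ lt_ck]] [_ _ R2C1_big C1_R2 [R2C2_small _]]].
have sR2' : {in ~: ord_itv k a b, forall i, s i \in ord_itv k c k}.
  move=> i; rewrite !inE ltn_ord andbT; apply: contraR; rewrite -ltnNge; exact: C1_R2.
have card_C1 : #|ord_itv k 0 c| = c by rewrite card_ord_itv; lia.
have card_R2 : #|ord_itv k a b| = b - a by rewrite card_ord_itv; lia.
have C1_img (A : {set 'I_k}) : {in A, forall i, s i < c} -> #|A| <= c.
  by move=> sA; rewrite -card_C1; apply: (@leq_card_image _ s) => i /sA; rewrite in_ord_itv.
have le_2c : 2 <= c.
  by apply: leq_trans R2C1_big (C1_img _ _) => i; rewrite inE => /andP[].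
have le_c_R2 : c <= b - a.
  rewrite -card_R2 -card_C1; apply: (@leq_card_preimage _ s) => i.
  by rewrite !in_ord_itv => /C1_R2.
have le_R2_c2 : b - a <= c + 2.
  set T := [set i : 'I_k | (a <= i < b) && (c <= s i)] in R2C2_small.
  have sub : ord_itv k a b \subset [set i : 'I_k | s i < c] :|: T.
    by apply/subsetP => i; rewrite !inE => ->; case: ltnP.
  rewrite -card_R2; apply: leq_trans (subset_leq_card sub) _.
  apply: leq_trans (leq_card_setU _ _).1 (leq_add _ R2C2_small).
  by apply: C1_img => i; rewrite inE.
by rewrite le_c_R2 le_R2_c2; split; last exact/perm_intoP.
Qed.

Lemma class3_perm_into q : class3 q -> exists a b c,
  [/\ [/\ 0 < a, b < k, 2 <= c & c <= b - a <= c + 2]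
    & q \in perm_into (~: (ord_itv k 0 1 :|: ord_itv k a b)) (ord_itv k c k)].
Proof.
case=> x [a [b [c [r [x_shape /andP[r_R2 _] _ q_x]]]]].
have [shape /perm_intoP x_R2'] := class2w_perm_into x_shape.
exists a, b, c; split => //; apply/perm_intoP => i.
rewrite !inE negb_or leq0n -leqNgt => /andP[i_gt0 i_R2'].
have lt_mv : mvrow r i < k.
  by rewrite /mvrow eqn0Ngt i_gt0 /=; have := ltn_ord i; case: ifP; lia.
rewrite (q_x i (Ordinal lt_mv)) //.
have := x_R2' (Ordinal lt_mv); rewrite !inE /=; apply.
by move: i_R2'; rewrite /mvrow eqn0Ngt i_gt0 /=; case: ifP; lia.
Qed.

Lemma class4_perm_into s : class4 s -> exists a w c,
  [/\ 0 < a, a + w < k, 0 < c, c + (k - w) < k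
    & s \in perm_into (~: ord_itv k a (a + w)) (ord_itv k c (c + (k - w)))].
Proof.
case=> a [b [c [d [[a_gt0 lt_ab lt_bk] [c_gt0 lt_cd lt_dk] _ blocks]]]].
have sR2' : {in ~: ord_itv k a b, forall i, s i \in ord_itv k c d}.
  by move=> i; rewrite !inE => R2'i; case/or4P: (blocks i) => /andP[]; lia.
have sC2 i : s i \in ord_itv k c d -> i \in ~: ord_itv k a b.
  by rewrite !inE => C2si; case/or4P: (blocks i) => /andP[]; lia.
have := leq_card_image sR2'; have := leq_card_preimage sC2.
rewrite card_ord_itvC !card_ord_itv => le_C2_R2' le_R2'_C2.
exists a, (b - a), c; have -> : a + (b - a) = b by lia.
have -> : c + (k - (b - a)) = d by lia.
by split => //; try lia; exact/perm_intoP.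
Qed.

End ClassShapes.

Section ClassCounts.
Variable k : nat.
Hypothesis k_ge16 : 16 <= k.

Lemma card_class1 :
  #|[set s : {perm 'I_k} | `[< class1 s >]]| * denom k <= k`! * total_weight k.
Proof.
(* x = (a, a - c) for the row split a and the column split c *)
apply: (@card_class_covered k ('I_k.+1 * 'I_3)%type (fun x => (0 < x.1 - x.2) && (x.1 < k))
  (fun x => ord_itv k x.1 k) (fun x => ord_itv k (x.1 - x.2) k)
  (fun x => (k - 1 <= x.1) + (x.1 <= 3)) (fun x => (k - 7 <= x.1) + (x.1 <= 9))) => //.
- case=> a t /= /andP[t_a a_k]; rewrite !card_ord_itv; have := ltn_ord t.
  by split; lia.
- rewrite (sum_fst _ (fun a : 'I_k.+1 => (k - 1 <= a) + (a <= 3))) big_split /=.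
  by rewrite sum_ord_geq sum_ord_leq card_ord; lia.
- rewrite (sum_fst _ (fun a : 'I_k.+1 => (k - 7 <= a) + (a <= 9))) big_split /=.
  by rewrite sum_ord_geq sum_ord_leq card_ord; lia.
- by rewrite card_prod !card_ord; nia.
move=> s /class1_perm_into[a [c [c_gt0 /andP[le_ca le_ac2] lt_ak sXY]]].
exists (inord a, inord (a - c)); rewrite /= !inordK; try lia.
by have -> : a - (a - c) = c by lia.
Qed.

Lemma card_class2 :
  #|[set s : {perm 'I_k} | `[< class2 s >]]| * denom k <= k`! * total_weight k.
Proof.
(* x = (c, b - a - c, a) for the row splits a < b and the column split c *)
apply: (@card_class_covered k ('I_k.+1 * 'I_3 * 'I_k.+1)%type
  (fun x => [&& 1 < x.1.1, 0 < x.2 & x.2 + x.1.1 + x.1.2 < k])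
  (fun x => ~: ord_itv k x.2 (x.2 + x.1.1 + x.1.2)) (fun x => ord_itv k x.1.1 k)
  (fun=> 0) (fun x => (x.1.1 <= 7) + (x.2 <= 7))) => //.
- case=> [[c t] a] /= /and3P[c_gt1 a_gt0 lt_k]; rewrite card_ord_itvC !card_ord_itv.
  by have := ltn_ord t; split; lia.
- by rewrite big1.
- rewrite big_split /= (sum_fst _ (fun y : 'I_k.+1 * 'I_3 => (y.1 <= 7 : nat))).
  rewrite (sum_fst _ (fun c : 'I_k.+1 => (c <= 7 : nat))).
  by rewrite (sum_snd _ (fun a : 'I_k.+1 => (a <= 7 : nat))) sum_ord_leq !card_prod !card_ord; lia.
- by rewrite !card_prod !card_ord; nia.
move=> s [a [b [c /class2w_perm_into[[a_gt0 lt_bk le_2c /andP[le_c_R2 le_R2_c2]] sR2']]]].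
exists (inord c, inord (b - a - c), inord a); rewrite /= !inordK; try lia.
by have -> : a + c + (b - a - c) = b by lia.
Qed.

Lemma card_class3 :
  #|[set s : {perm 'I_k} | `[< class3 s >]]| * denom k <= k`! * total_weight k.
Proof.
(* same parameters as for the class2 matrix the row is moved from *)
apply: (@card_class_covered k ('I_k.+1 * 'I_3 * 'I_k.+1)%type
  (fun x => [&& 1 < x.1.1, 0 < x.2 & x.2 + x.1.1 + x.1.2 < k])
  (fun x => ~: (ord_itv k 0 1 :|: ord_itv k x.2 (x.2 + x.1.1 + x.1.2)))
  (fun x => ord_itv k x.1.1 k)
  (fun x => (k - 4 <= x.1.1) * (x.2 <= 1)) (fun x => (x.1.1 <= 7) + (x.2 <= 7))) => //.
- case=> [[c t] a] /= /and3P[c_gt1 a_gt0 lt_k].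
  have := leq_card_setCU (ord_itv k 0 1) (ord_itv k a (a + c + t)).
  rewrite card_ord !card_ord_itv muln_gt0; set N := #|~: _|.
  by have := ltn_ord t; split; lia.
- rewrite (sum_mul_pair (fun y : 'I_k.+1 * 'I_3 => (k - 4 <= y.1 : nat))
    (fun a : 'I_k.+1 => (a <= 1 : nat))).
  rewrite (sum_fst _ (fun c : 'I_k.+1 => (k - 4 <= c : nat))).
  by rewrite sum_ord_geq sum_ord_leq card_ord; lia.
- rewrite big_split /= (sum_fst _ (fun y : 'I_k.+1 * 'I_3 => (y.1 <= 7 : nat))).
  rewrite (sum_fst _ (fun c : 'I_k.+1 => (c <= 7 : nat))).
  by rewrite (sum_snd _ (fun a : 'I_k.+1 => (a <= 7 : nat))) sum_ord_leq !card_prod !card_ord; lia.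
- by rewrite !card_prod !card_ord; nia.
move=> q /class3_perm_into[a [b [c [[a_gt0 lt_bk le_2c /andP[le_c_R2 le_R2_c2]] qR2']]]].
exists (inord c, inord (b - a - c), inord a); rewrite /= !inordK; try lia.
by have -> : a + c + (b - a - c) = b by lia.
Qed.

Lemma card_class4 :
  #|[set s : {perm 'I_k} | `[< class4 s >]]| * denom k <= k`! * total_weight k.
Proof.
(* x = (a, b - a, c) for the row splits a < b and the first column split c *)
apply: (@card_class_covered k ('I_k.+1 * 'I_k.+1 * 'I_k.+1)%type
  (fun x => [&& 0 < x.1.1, x.1.1 + x.1.2 < k, 0 < x.2 & x.2 + (k - x.1.2) < k])
  (fun x => ~: ord_itv k x.1.1 (x.1.1 + x.1.2)) (fun x => ord_itv k x.2 (x.2 + (k - x.1.2)))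
  (fun=> 0) (fun x => (x.1.1 <= 7) * (k - 7 <= x.1.2) + (x.1.2 <= 7) * (x.2 <= 7))) => //.
- case=> [[a w] c] /= /and4P[a_gt0 lt_k c_gt0 lt_k'].
  by rewrite card_ord_itvC !card_ord_itv; split; lia.
- by rewrite big1.
- rewrite big_split /=.
  rewrite (sum_fst _ (fun y : 'I_k.+1 * 'I_k.+1 => (y.1 <= 7) * (k - 7 <= y.2))).
  rewrite (sum_mul_pair (fun y : 'I_k.+1 * 'I_k.+1 => (y.2 <= 7 : nat))
    (fun c : 'I_k.+1 => (c <= 7 : nat))).
  rewrite (sum_mul_pair (fun a : 'I_k.+1 => (a <= 7 : nat))
    (fun w : 'I_k.+1 => (k - 7 <= w : nat))).
  rewrite (sum_snd _ (fun w : 'I_k.+1 => (w <= 7 : nat))).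
  by rewrite sum_ord_geq sum_ord_leq card_ord; nia.
- by rewrite !card_prod !card_ord; nia.
move=> s /class4_perm_into[a [w [c [a_gt0 lt_k c_gt0 lt_k' sR2']]]].
by exists (inord a, inord w, inord c); rewrite /= !inordK; try lia.
Qed.

Lemma card_special :
  #|[set s : {perm 'I_k} | `[< special s >]]| * denom k <= 4 * (k`! * total_weight k).
Proof.
have card_setU4 (A B C D : {set {perm 'I_k}}) :
    #|A :|: B :|: C :|: D| <= #|A| + #|B| + #|C| + #|D|.
  apply: leq_trans (leq_card_setU _ _).1 _; rewrite leq_add2r.
  apply: leq_trans (leq_card_setU _ _).1 _; rewrite leq_add2r.
  exact: (leq_card_setU _ _).1.
have sub : [set s : {perm 'I_k} | `[< special s >]] \subset
    [set s | `[< class1 s >]] :|: [set s | `[< class2 s >]]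
      :|: [set s | `[< class3 s >]] :|: [set s | `[< class4 s >]].
  apply/subsetP => s; rewrite !inE.
  by move=> /asboolP[c|[c|[c|c]]]; rewrite (asboolT c) ?orbT.
apply: leq_trans (leq_mul (leq_trans (subset_leq_card sub) (card_setU4 _ _ _ _)) (leqnn _)) _.
rewrite !mulnDl (_ : 4 = 1 + 1 + 1 + 1) // !mulnDl !mul1n.
apply: leq_add; first apply: leq_add; first apply: leq_add.
- exact: card_class1.
- exact: card_class2.
- exact: card_class3.
- exact: card_class4.
Qed.

End ClassCounts.

Theorem lemma3 :
  forall m : nat, 0 < m ->
  exists K : nat, forall k : nat, K <= k ->
    m * (k`! - n_ordinary k) <= k`!.
Proof.
move=> m m_gt0; have [K total_small] := total_weight_small (32 * m).
exists (K + 16) => k le_Kk; have k_ge16 : 16 <= k by lia.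
have denom_gt0 : 0 < denom k by rewrite /denom !muln_gt0 !bin_gt0; lia.
rewrite -(leq_pmul2r denom_gt0).
have small := total_small k (leq_trans (leq_addr _ _) le_Kk).
have few_special := card_special k_ge16.
move: (card_not_ordinary k) few_special.
set S := #|_| => not_ord few_special.
have := leq_mul (leqnn m) (leq_mul not_ord (leqnn (denom k))).
have := leq_mul (leqnn (8 * m)) few_special.
have := leq_mul (leqnn k`!) small.
nia.
Qed.
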